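(* Let $d\ge1$, $M := e_1e_2^\top + e_2e_1^\top$, $q_{\mathrm{pop}}(w) := w^\top Mw$, $u_\pm := (e_1\pm e_2)/\sqrt2$ and $P_{12} := u_+u_+^\top+u_-u_-^\top$. Let $w_0$ and $w_{T_\star}$ be unit vectors in $\mathbb{R}^d$ such that \[ |q_{\mathrm{pop}}(w_0)|\ge\frac{3}{4d},\qquad \|P_{12}w_0\|_2\le\frac1{\sqrt d},\qquad \|w_{T_\star} - w_0\|_2\le\frac{1}{4\sqrt d}. \] Then $\mathrm{sign}(q_{\mathrm{pop}}(w_{T_\star})) = \mathrm{sign}(q_{\mathrm{pop}}(w_0))$. Moreover, if $s := \mathrm{sign}(q_{\mathrm{pop}}(w_0))$ and $u_s := (e_1 + s e_2)/\sqrt2$, then \[ |\langle w_{T_\star},u_s\rangle| \ge \Big(\frac{\sqrt3}{2}-\frac14\Big)\frac{1}{\sqrt d} \ge \frac{1}{2\sqrt d}. \]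
   Context: In the paper, $w_0$ is the initial inner weight and $w_{T_\star}$ the inner weight at the end of Phase 1; only the stated deterministic conditions are used. *)

From HB Require Import structures.
From mathcomp Require Import all_boot all_order all_algebra.
Set Implicit Arguments. Unset Strict Implicit. Unset Printing Implicit Defensive.
Import Order.TTheory GRing.Theory Num.Theory.
Local Open Scope ring_scope.

Section Defs.
Variables (R : rcfType) (d : nat).

(* standard basis vector e_{k+1} of R^d (0-based nat index k); it is the zero
   vector if k >= d (only relevant for d = 1, where e_2 does not exist). *)
Definition evec (k : nat) : 'cV[R]_d := \col_(i < d) (((i : nat) == k)%:R).

Definition e1 : 'cV[R]_d := evec 0.
Definition e2 : 'cV[R]_d := evec 1.

Definition Mpop : 'M[R]_d := e1 *m e2^T + e2 *m e1^T.

Definition qpop (w : 'cV[R]_d) : R := (w^T *m Mpop *m w) 0 0.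

Definition inner (v w : 'cV[R]_d) : R := (v^T *m w) 0 0.

Definition norm2 (w : 'cV[R]_d) : R := Num.sqrt (\sum_(i < d) w i 0 ^+ 2).

Definition uplus : 'cV[R]_d := (Num.sqrt 2)^-1 *: (e1 + e2).
Definition uminus : 'cV[R]_d := (Num.sqrt 2)^-1 *: (e1 - e2).

Definition P12 : 'M[R]_d := uplus *m uplus^T + uminus *m uminus^T.

Definition u_sgn (s : R) : 'cV[R]_d := (Num.sqrt 2)^-1 *: (e1 + s *: e2).

End Defs.

(* Only the coordinates a = w_1, b = w_2 matter: q_pop(w) = 2ab, |P12 w|^2 = a^2 + b^2
   and <w, u_s> = (a + s b)/sqrt 2, so everything happens in the plane.  Scale by
   rho = 1/sqrt d and flip the sign of b so that ab > 0.  Then (a + b)^2 >= 4ab >= 3 rho^2/2,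
   while the perturbation (x, y) = w_T - w_0 in these coordinates has
   |x + y| <= rho/(2 sqrt 2); this gives the lower bound.  For the sign,
   |a+b| - |a-b| >= 3 rho/4 because (|a+b| - |a-b|)(|a+b| + |a-b|) = 4ab and
   |a+b| + |a-b| <= 2 rho, whereas the perturbation moves |a+b| - |a-b| by at most
   |x+y| + |x-y| <= rho/2; since (c+e)^2 - (c-e)^2 = 4ce, the perturbed product stays
   positive. *)

From HB Require Import structures.
From mathcomp Require Import all_boot all_order all_algebra.
From mathcomp Require Import ring lra.
Import Order.TTheory GRing.Theory Num.Theory.
Set Implicit Arguments.
Unset Strict Implicit.
Unset Printing Implicit Defensive.
Local Open Scope ring_scope.

Section PlanarEstimate.
Variable R : rcfType.
Implicit Types a b c e x y u v ρ : R.

Lemma ler_of_sqr u v : 0 <= v -> u ^+ 2 <= v ^+ 2 -> u <= v.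
Proof. by move=> v0 uv; nra. Qed.

Lemma sqrtr_le_sqr u v : 0 <= u -> Num.sqrt u <= v -> u <= v ^+ 2.
Proof. by move=> u0 uv; have := sqr_sqrtr u0; have := sqrtr_ge0 u; nra. Qed.

Lemma sqr_normr u : `|u| ^+ 2 = u ^+ 2.
Proof. exact: real_normK (num_real u). Qed.

Lemma normD_normB_le x y ρ : 0 <= ρ -> x ^+ 2 + y ^+ 2 <= (ρ / 4) ^+ 2 ->
  `|x + y| + `|x - y| <= ρ / 2.
Proof.
move=> ρ0 hxy; apply: ler_of_sqr; first lra.
have := sqr_normr (x + y); have := sqr_normr (x - y); nra.
Qed.

Lemma normD_normB_gap a b ρ : 0 <= ρ -> 3 * ρ ^+ 2 / 4 <= 2 * a * b ->
  a ^+ 2 + b ^+ 2 <= ρ ^+ 2 -> 3 * ρ / 4 <= `|a + b| - `|a - b|.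
Proof.
move=> ρ0 hab hn.
have := sqr_normr (a + b); have := sqr_normr (a - b).
have := normr_ge0 (a + b); have := normr_ge0 (a - b) => ? ? ? ?.
have hS : `|a + b| + `|a - b| <= 2 * ρ by apply: ler_of_sqr; nra.
nra.
Qed.

Lemma planar_estimate_pos a b c e ρ : 0 < ρ ->
  3 * ρ ^+ 2 / 4 <= 2 * a * b -> a ^+ 2 + b ^+ 2 <= ρ ^+ 2 ->
  (c - a) ^+ 2 + (e - b) ^+ 2 <= (ρ / 4) ^+ 2 ->
  0 < c * e /\ (Num.sqrt 3 / 2 - 1 / 4) * ρ <= `|(Num.sqrt 2)^-1 * (c + e)|.
Proof.
move=> ρ0 hab hn hd.
have gap := normD_normB_gap (ltW ρ0) hab hn.
have pert := normD_normB_le (ltW ρ0) hd.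
have hplus : `|a + b| - `|(c - a) + (e - b)| <= `|c + e|.
  have -> : c + e = (a + b) + ((c - a) + (e - b)) by ring.
  exact: lerB_normD.
have hminus : `|c - e| <= `|a - b| + `|(c - a) - (e - b)|.
  have -> : c - e = (a - b) + ((c - a) - (e - b)) by ring.
  exact: ler_normD.
split.
  have := sqr_normr (c + e); have := sqr_normr (c - e).
  have := normr_ge0 (c - e); nra.
have t0 : 0 < Num.sqrt (2 : R) by rewrite sqrtr_gt0.
have t2 : Num.sqrt (2 : R) ^+ 2 = 2 by rewrite sqr_sqrtr.
have s2 : Num.sqrt (3 : R) ^+ 2 = 3 by rewrite sqr_sqrtr.
have hab_big : Num.sqrt 3 * Num.sqrt 2 * ρ / 2 <= `|a + b|.
  apply: ler_of_sqr; rewrite ?normr_ge0 // sqr_normr.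
  have -> : (Num.sqrt 3 * Num.sqrt 2 * ρ / 2) ^+ 2 = 3 * ρ ^+ 2 / 2.
    by rewrite !exprMn s2 t2; field.
  have := sqr_ge0 (a - b); lra.
have hxy_small : `|(c - a) + (e - b)| <= Num.sqrt 2 * ρ / 4.
  apply: ler_of_sqr; first by have := mulr_gt0 t0 ρ0; lra.
  have -> : (Num.sqrt 2 * ρ / 4) ^+ 2 = ρ ^+ 2 / 8 by rewrite !exprMn t2; field.
  by rewrite sqr_normr; have := sqr_ge0 ((c - a) - (e - b)); lra.
rewrite normrM normfV (gtr0_norm t0) ler_pdivlMl //.
lra.
Qed.

Lemma half_le_sqrt3_half_sub_quarter : 2^-1 <= Num.sqrt (3 : R) / 2 - 1 / 4.
Proof.
suff : 3 / 2 <= Num.sqrt (3 : R) by lra.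
by apply: ler_of_sqr; rewrite ?sqrtr_ge0 // sqr_sqrtr //; lra.
Qed.

Lemma planar_estimate a b c e ρ : 0 < ρ ->
  3 * ρ ^+ 2 / 4 <= `|2 * a * b| -> a ^+ 2 + b ^+ 2 <= ρ ^+ 2 ->
  (c - a) ^+ 2 + (e - b) ^+ 2 <= (ρ / 4) ^+ 2 ->
  let s := Num.sg (2 * a * b) in
  Num.sg (2 * c * e) = s /\
  (Num.sqrt 3 / 2 - 1 / 4) * ρ <= `|(Num.sqrt 2)^-1 * (c + s * e)|.
Proof.
move=> ρ0 hab hn hd s.
have s_unit : s ^+ 2 = 1.
  rewrite /s sqr_sg; case: eqP hab => // ->; rewrite normr0; nra.
have [ce_pos bound] : 0 < c * (s * e) /\
    (Num.sqrt 3 / 2 - 1 / 4) * ρ <= `|(Num.sqrt 2)^-1 * (c + s * e)|.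
  apply: (planar_estimate_pos (a := a) (b := s * b)) => //.
  - have -> : 2 * a * (s * b) = s * (2 * a * b) by ring.
    by rewrite /s -normrEsg.
  - by rewrite exprMn s_unit mul1r.
  - by rewrite -mulrBr exprMn s_unit mul1r.
split=> //.
have : Num.sg (s * (2 * c * e)) = 1.
  apply: gtr0_sg; have -> : s * (2 * c * e) = 2 * (c * (s * e)) by ring.
  by rewrite mulr_gt0.
rewrite sgrM sgr_id => /(congr1 ( *%R s)).
by rewrite mulrA -expr2 s_unit mul1r mulr1.
Qed.

End PlanarEstimate.

Section Coordinates.
Variables (R : rcfType) (d : nat).
Implicit Types (u v w : 'cV[R]_d).

Lemma innerE u v : inner u v = \sum_i u i 0 * v i 0.
Proof. by rewrite /inner mxE; apply: eq_bigr => i _; rewrite mxE. Qed.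

Lemma innerC u v : inner u v = inner v u.
Proof. by rewrite !innerE; apply: eq_bigr => i _; rewrite mulrC. Qed.

Lemma inner_evec w (i : 'I_d) : inner w (evec R d i) = w i 0.
Proof.
rewrite innerE (bigD1 i) //= big1 => [|j ji]; rewrite !mxE ?eqxx.
  by rewrite mulr1 addr0.
by have /negbTE -> : (j : nat) != i by []; rewrite mulr0.
Qed.

Lemma evec_out k : (d <= k)%N -> evec R d k = 0.
Proof.
move=> dk; apply/matrixP => i j.
by rewrite !mxE ltn_eqF // (leq_trans (ltn_ord i) dk).
Qed.

Lemma inner_u_sgn w s :
  inner w (u_sgn d s) = (Num.sqrt 2)^-1 * (inner w (e1 R d) + s * inner w (e2 R d)).
Proof. by rewrite /inner /u_sgn -scalemxAr mulmxDr -scalemxAr !mxE. Qed.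

Lemma mulmx_outer u v w i : (u *m v^T *m w) i 0 = u i 0 * inner v w.
Proof. by rewrite -mulmxA mxE big_ord1. Qed.

Lemma quad_outer u v w : (w^T *m (u *m v^T) *m w) 0 0 = inner w u * inner v w.
Proof. by rewrite mulmxA -mulmxA mxE big_ord1. Qed.

Lemma qpopE w : qpop w = 2 * inner w (e1 R d) * inner w (e2 R d).
Proof.
rewrite /qpop /Mpop mulmxDr mulmxDl mxE !quad_outer.
by rewrite (innerC (e2 _ _)) (innerC (e1 _ _)); ring.
Qed.

Lemma qpop_dim1 w : (d <= 1)%N -> qpop w = 0.
Proof.
by move=> d1; rewrite qpopE /e2 evec_out // /inner mulmx0 [X in _ * X]mxE mulr0.
Qed.

Lemma P12E : P12 R d = e1 R d *m (e1 R d)^T + e2 R d *m (e2 R d)^T.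
Proof.
have half : (Num.sqrt 2 : R)^-1 ^+ 2 = 2^-1 by rewrite exprVn sqr_sqrtr.
apply/matrixP => i j; rewrite /P12 /uplus /uminus !mxE !big_ord1 !mxE.
set c := (Num.sqrt 2)^-1.
have -> : forall p q x y : R,
    c * (p + q) * (c * (x + y)) + c * (p - q) * (c * (x - y))
    = c ^+ 2 * 2 * (p * x + q * y).
  by move=> *; ring.
by rewrite half mulVf ?mul1r ?pnatr_eq0.
Qed.

End Coordinates.

Section TwoCoordinates.
Variables (R : rcfType) (n : nat).
Local Notation d := n.+2.
Local Notation i1 := (lift ord0 (ord0 : 'I_n.+1)).
Implicit Types w : 'cV[R]_d.

Lemma big_ord_recl2 (f : 'I_d -> R) :
  \sum_i f i = f ord0 + f i1 + \sum_(i < n) f (lift ord0 (lift ord0 i)).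
Proof. by rewrite !big_ord_recl addrA. Qed.

Lemma inner_e1 w : inner w (e1 R d) = w ord0 0.
Proof. exact: (inner_evec w ord0). Qed.

Lemma inner_e2 w : inner w (e2 R d) = w i1 0.
Proof. exact: (inner_evec w i1). Qed.

Lemma norm2_P12 w : norm2 (P12 R d *m w) = Num.sqrt (w ord0 0 ^+ 2 + w i1 0 ^+ 2).
Proof.
have P12wE i : (P12 R d *m w) i 0 = e1 R d i 0 * w ord0 0 + e2 R d i 0 * w i1 0.
  by rewrite P12E mulmxDl mxE !mulmx_outer !(innerC _ w) inner_e1 inner_e2.
rewrite /norm2 big_ord_recl2 big1 => [|i _]; rewrite !P12wE !mxE /=.
  by rewrite mul1r mul0r !addr0 mul0r mul1r add0r.
by rewrite !mul0r addr0 expr0n.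
Qed.

Lemma sqrt_coord2_le_norm2 w : Num.sqrt (w ord0 0 ^+ 2 + w i1 0 ^+ 2) <= norm2 w.
Proof.
by rewrite ler_wsqrtr // big_ord_recl2 lerDl sumr_ge0 // => i _; rewrite sqr_ge0.
Qed.

End TwoCoordinates.

Theorem lemma15 (R : rcfType) (d : nat) (hd : (1 <= d)%N)
    (w0 wT : 'cV[R]_d)
    (hw0 : norm2 w0 = 1) (hwT : norm2 wT = 1)
    (hq : 3 / (4 * d%:R) <= `|qpop w0|)
    (hP : norm2 (@P12 R d *m w0) <= (Num.sqrt (d%:R : R))^-1)
    (hdist : norm2 (wT - w0) <= (4 * Num.sqrt (d%:R))^-1) :
  Num.sg (qpop wT) = Num.sg (qpop w0) /\
  (let s := Num.sg (qpop w0) in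
   (Num.sqrt (3 : R) / 2 - 1 / 4) / Num.sqrt (d%:R) <= `|inner wT (@u_sgn R d s)| /\
   (2 * Num.sqrt (d%:R))^-1 <= (Num.sqrt (3 : R) / 2 - 1 / 4) / Num.sqrt (d%:R)).
Proof.
case: d hd w0 wT hw0 hwT hq hP hdist => [//|[|n]] _ w0 wT _ _ hq hP hdist.
  by move: hq; rewrite qpop_dim1 // normr0; lra.
set ρ := (Num.sqrt n.+2%:R)^-1.
have ρ0 : 0 < ρ by rewrite invr_gt0 sqrtr_gt0.
have hq2 : 3 * ρ ^+ 2 / 4 <= `|2 * w0 ord0 0 * w0 (lift ord0 ord0) 0|.
  by rewrite -inner_e1 -inner_e2 -qpopE exprVn sqr_sqrtr // -mulrA -invfM [_ * 4]mulrC.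
move: hP; rewrite norm2_P12 => /(sqrtr_le_sqr (addr_ge0 (sqr_ge0 _) (sqr_ge0 _))) hP2.
have hdist2 : (wT ord0 0 - w0 ord0 0) ^+ 2
    + (wT (lift ord0 ord0) 0 - w0 (lift ord0 ord0) 0) ^+ 2 <= (ρ / 4) ^+ 2.
  apply: sqrtr_le_sqr; first by rewrite addr_ge0 ?sqr_ge0.
  have := sqrt_coord2_le_norm2 (wT - w0); rewrite !mxE => /le_trans; apply.
  by rewrite /ρ -invfM mulrC.
have [sg_eq bound] := planar_estimate ρ0 hq2 hP2 hdist2.
rewrite /= !qpopE !inner_e1 !inner_e2 inner_u_sgn inner_e1 inner_e2 sg_eq.
split=> //; split=> //.
by rewrite invfM -/ρ ler_wpM2r ?(ltW ρ0) // half_le_sqrt3_half_sub_quarter.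
Qed.
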